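(* Let $1\le m\le n$, $x=(x_1,\dots,x_m)$, $y=(y_1,\dots,y_n)$, and let $k$ be an integer with $1\le k\le m$. Then \[\omega(x,y;t)=t^{m-n}(1-t)\sum_{l=1}^n\omega(x^{(k)},y^{(l)};t)\,\frac{y_l}{x_k-ty_l}\prod_{\substack{i=1\\ i\ne k}}^m\frac{x_i-y_l}{x_i-ty_l}\prod_{\substack{i=1\\ i\ne l}}^n\frac{y_i-ty_l}{y_i-y_l}.\]
   Context: For $x=(x_1,\dots,x_m)$ and $y=(y_1,\dots,y_n)$ (any $m\ge0$, with $\omega=1$ when $m=0$), \[\omega(x,y;t)=\sum_{I\subseteq\{1,\dots,m\}}(-1)^{|I|}t^{\binom{|I|}{2}}\prod_{i\in I,\ j\in\{1,\dots,m\}\setminus I}\frac{x_i-tx_j}{x_i-x_j}\prod_{i\in I}\prod_{j=1}^n\frac{x_i-y_j}{x_i-ty_j}.\] $x^{(k)}$ denotes $x$ with $x_k$ removed, and $y^{(l)}$ denotes $y$ with $y_l$ removed. *)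

From mathcomp Require Import all_boot all_order all_algebra.
Set Implicit Arguments. Unset Strict Implicit. Unset Printing Implicit Defensive.
Import Order.TTheory GRing.Theory Num.Theory.
Local Open Scope ring_scope.

Definition omega (F : fieldType) (m n : nat) (x : 'I_m -> F) (y : 'I_n -> F)
  (t : F) : F :=
  \sum_(I : {set 'I_m})
    ((-1) ^+ #|I| * t ^+ 'C(#|I|, 2)
     * (\prod_(i in I) \prod_(j in ~: I) ((x i - t * x j) / (x i - x j)))
     * (\prod_(i in I) \prod_(j : 'I_n) ((x i - y j) / (x i - t * y j)))).

Definition remove_at (F : Type) (m : nat) (k : 'I_m) (x : 'I_m -> F)
  : 'I_m.-1 -> F := fun j => x (lift k j).

From mathcomp Require Import all_boot all_order all_algebra.
From mathcomp Require Import ring.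
Set Implicit Arguments. Unset Strict Implicit. Unset Printing Implicit Defensive.
Import Order.TTheory GRing.Theory Num.Theory.
Local Open Scope ring_scope.

(* Write omega(x, y) as the sum over subsets I of c_I * prod_(i in I) f_i with
   f_i = prod_j (x_i - y_j) / (x_i - t y_j), and pair each J not containing k with J + {k}.
   Expanding prod_(a in J) (x_a - t x_k) / (x_a - x_k) in partial fractions in x_k, the
   pair becomes c'_J prod_(i in J) f_i times t^|J| (1 - B_J f_k) minus terms with poles at
   the x_i, i in J, where B_J = prod_(i notin J + {k}) tratio x_k x_i.  On the right-hand
   side, after expanding omega(x^(k), y^(l)) over the same J, the sum over l is the sum of
   the residues at z = t y_l of a rational function whose residues add up to 1.  Its
   residue at z = x_k produces the same t^|J| (1 - B_J f_k), and its residues at the x_i,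
   i notin J + {k}, cancel the partial fraction terms after re-indexing (J, i) -> (J + {i}, i).
   The partial fraction and the residue identities are both instances of the Lagrange
   interpolation identity sum_a p(r_a) / prod_(b <> a) (r_a - r_b) = [X^(N-1)] p for N nodes
   and deg p < N. *)

Section Interpolation.
Variable F : fieldType.

Lemma lagrange_sum_coef (I : finType) (A : {set I}) (r : I -> F) (p : {poly F}) :
  {in A &, injective r} -> (size p <= #|A|)%N ->
  \sum_(a in A) p.[r a] / \prod_(b in A :\ a) (r a - r b) = p`_#|A|.-1.
Proof.
move=> r_inj size_p.
pose q a := \prod_(b in A :\ a) ('X - (r b)%:P).
have size_q a : a \in A -> size (q a) = #|A|.
  by move=> Aa; rewrite /q -big_enum size_prod_XsubC -cardE (cardsD1 a A) Aa.
have denom_neq0 a : a \in A -> \prod_(b in A :\ a) (r a - r b) != 0.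
  move=> Aa; apply/prodf_neq0 => b; rewrite !inE => /andP[ba Ab].
  by rewrite subr_eq0; apply: contra ba => /eqP/r_inj-> //; rewrite eqxx.
pose L := \sum_(a in A) (p.[r a] / \prod_(b in A :\ a) (r a - r b)) *: q a.
have L_at a : a \in A -> L.[r a] = p.[r a].
  move=> Aa; rewrite horner_sum (bigD1 a) //= [X in _ + X]big1 ?addr0; last first.
    move=> b /andP[Ab ba]; rewrite hornerZ /q horner_prod [X in _ * X](bigD1 a) /=.
      by rewrite hornerXsubC subrr mul0r mulr0.
    by rewrite !inE eq_sym ba.
  rewrite hornerZ /q horner_prod [X in _ * X](eq_bigr (fun b => r a - r b)).
    by rewrite divfK ?denom_neq0.
  by move=> b _; rewrite hornerXsubC.
have pL : p = L.
  apply/eqP; rewrite -subr_eq0; apply/eqP.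
  apply: (@roots_geq_poly_eq0 _ _ [seq r a | a in A]).
  - by apply/allP => _ /imageP[a Aa ->]; rewrite /root !hornerE L_at // subrr.
  - by rewrite map_inj_in_uniq ?enum_uniq // => a b; rewrite !mem_enum; apply: r_inj.
  - rewrite size_map -cardE; apply: leq_trans (size_polyD _ _) _.
    rewrite size_polyN geq_max size_p /=; apply: leq_trans (size_sum _ _ _) _.
    by apply/bigmax_leqP => a Aa; rewrite (leq_trans (size_scale_leq _ _)) ?size_q.
rewrite [in RHS]pL coef_sum; apply: eq_bigr => a Aa.
by rewrite coefZ -(size_q a Aa) -lead_coefE lead_coef_prod_XsubC mulr1.
Qed.

Lemma size_prod_linear (I : Type) (s : seq I) (c d : I -> F) :
  (size (\prod_(a <- s) (c a *: 'X + (d a)%:P))%R <= (size s).+1)%N.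
Proof.
elim: s => [|a s IH]; first by rewrite big_nil size_poly1.
have size_lin : (size (c a *: 'X + (d a)%:P)%R <= 2)%N.
  rewrite (leq_trans (size_polyD _ _)) // geq_max (leq_trans (size_polyC_leq1 _)) //.
  by rewrite (leq_trans (size_scale_leq _ _)) ?size_polyX.
rewrite big_cons; apply: leq_trans (size_polyMleq _ _) _; rewrite -subn1 leq_subLR.
exact: leq_add size_lin IH.
Qed.

Lemma coef_prod_linear (I : Type) (s : seq I) (c d : I -> F) :
  (\prod_(a <- s) (c a *: 'X + (d a)%:P))`_(size s) = \prod_(a <- s) c a.
Proof.
elim: s => [|a s IH]; first by rewrite !big_nil coef1.
rewrite !big_cons mulrDl coefD -scalerAl coefZ coefXM coefCM /= IH.
by rewrite [_`_(size s).+1]nth_default ?mulr0 ?addr0 ?size_prod_linear.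
Qed.

End Interpolation.

Section BigSubsets.
Variables (R : Type) (idx : R) (op : Monoid.com_law idx).

Lemma big_lift_setC1 n (l : 'I_n) (G : 'I_n -> R) :
  \big[op/idx]_(j < n.-1) G (lift l j) = \big[op/idx]_(j in [set~ l]) G j.
Proof.
rewrite [RHS](reindex_omap (lift l) (unlift l)) /=.
  by apply: eq_bigl => j; rewrite !inE liftK eqxx andbT eq_sym neq_lift.
by move=> i; rewrite !inE; case: unliftP => [j ->|->] //; rewrite eqxx.
Qed.

Lemma big_subsets_setU1 (I : finType) (U : {set I}) (k : I) (G : {set I} -> R) :
  k \notin U ->
  \big[op/idx]_(K : {set I} | K \subset k |: U) G K
  = \big[op/idx]_(J : {set I} | J \subset U) op (G J) (G (k |: J)).
Proof.
move=> kU; rewrite big_split /= (bigID (fun K : {set I} => k \in K)) /= Monoid.mulmC.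
have subU (J : {set I}) : (J \subset U) = (J \subset k |: U) && (k \notin J).
  by rewrite -subsetD1 setU1K.
congr (op _ _); first by apply: eq_bigl => J; rewrite subU.
rewrite (reindex_onto (fun J : {set I} => k |: J) (fun K : {set I} => K :\ k)) /=; last first.
  by move=> K /andP[_ kK]; rewrite setD1K.
apply: eq_bigl => J; rewrite setU11 andbT subU subUset sub1set setU11 /=.
case: (boolP (k \in J)) => kJ; last by rewrite setU1K // eqxx.
rewrite andbF; apply/negbTE/negP => /andP[_ /eqP/setP/(_ k)].
by rewrite !inE eqxx kJ.
Qed.

Lemma big_subsets_setD1 (I : finType) (U : {set I}) (G : {set I} -> I -> R) :
  \big[op/idx]_(J : {set I} | J \subset U) \big[op/idx]_(i in U :\: J) G J i
  = \big[op/idx]_(J : {set I} | J \subset U) \big[op/idx]_(i in J) G (J :\ i) i.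
Proof.
rewrite (exchange_big_dep (mem U)) /=; last by move=> J i _; rewrite inE => /andP[].
rewrite [RHS](exchange_big_dep (mem U)) /=; last by move=> J i /subsetP; apply.
apply: eq_bigr => i Ui.
rewrite [RHS](reindex_onto (fun J : {set I} => i |: J) (fun J : {set I} => J :\ i)) /=; last first.
  by move=> J /andP[_ iJ]; rewrite setD1K.
apply: eq_big => J; last by rewrite !inE => /andP[_ /andP[iJ _]]; rewrite setU1K.
rewrite setU11 andbT subUset sub1set !inE Ui andbT /=.
case: (boolP (i \in J)) => iJ; last by rewrite setU1K ?eqxx ?andbT.
rewrite andbF; apply/esym/negbTE/negP => /andP[_ /eqP/setP/(_ i)].
by rewrite !inE eqxx iJ.
Qed.

Lemma big_subsets_setC1 m (k : 'I_m) (G : {set 'I_m} -> R) :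
  \big[op/idx]_(J : {set 'I_m} | J \subset [set~ k]) G J
  = \big[op/idx]_(J : {set 'I_m.-1}) G (lift k @: J).
Proof.
rewrite (reindex_onto (fun J : {set 'I_m.-1} => lift k @: J) (fun J => lift k @^-1: J)) /=.
  apply: eq_bigl => J; rewrite (_ : lift k @^-1: _ = J) ?eqxx ?andbT.
    by apply/subsetP => _ /imsetP[j _ ->]; rewrite !inE eq_sym neq_lift.
  by apply/setP => j; rewrite inE mem_imset //; apply: lift_inj.
move=> J /subsetP kJ; apply/setP => z; apply/imsetP/idP => [[j]|Jz].
  by rewrite inE => Jj ->.
case: (unliftP k z) Jz => [j ->|->] Jz; first by exists j; rewrite ?inE.
by have := kJ _ Jz; rewrite !inE eqxx.
Qed.

End BigSubsets.

Section SumSet.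
Variables (I1 I2 : finType) (A1 : {set I1}) (A2 : {set I2}).

Definition sum_set : {set I1 + I2} :=
  [set z | match z with inl i => i \in A1 | inr j => j \in A2 end].

Lemma big_sum_set (R : Type) (idx : R) (op : Monoid.com_law idx) (G : I1 + I2 -> R) :
  \big[op/idx]_(z in sum_set) G z
  = op (\big[op/idx]_(i in A1) G (inl i)) (\big[op/idx]_(j in A2) G (inr j)).
Proof. by rewrite big_sumType; congr (op _ _); apply: eq_bigl => ?; rewrite inE. Qed.

Lemma card_sum_set : #|sum_set| = (#|A1| + #|A2|)%N.
Proof. by rewrite -!sum1_card big_sum_set. Qed.

End SumSet.

Lemma sum_setD1l (I1 I2 : finType) (A1 : {set I1}) (A2 : {set I2}) (i : I1) :
  sum_set A1 A2 :\ inl i = sum_set (A1 :\ i) A2.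
Proof. by apply/setP => -[j|j]; rewrite !inE. Qed.

Lemma sum_setD1r (I1 I2 : finType) (A1 : {set I1}) (A2 : {set I2}) (i : I2) :
  sum_set A1 A2 :\ inr i = sum_set A1 (A2 :\ i).
Proof. by apply/setP => -[j|j]; rewrite !inE. Qed.

Lemma setD1U1 (T : finType) (A : {set T}) (a b : T) : a != b -> (a |: A) :\ b = a |: (A :\ b).
Proof. by move=> ab; apply/setP => z; rewrite !inE; case: (eqVneq z a) => [->|]; rewrite ?ab. Qed.

Lemma prodrB_sign (R : comPzRingType) (I : finType) (A : {pred I}) (u v : I -> R) :
  \prod_(b in A) (u b - v b) = (-1) ^+ #|A| * \prod_(b in A) (v b - u b).
Proof. by rewrite -prodrN; apply: eq_bigr => b _; rewrite opprB. Qed.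

Section OmegaSubsets.
Variables (F : fieldType) (m n : nat) (x : 'I_m -> F) (y : 'I_n -> F) (t : F).

Definition tratio (a b : F) : F := (a - t * b) / (a - b).

Definition omega_coef (U J : {set 'I_m}) : F :=
  (-1) ^+ #|J| * t ^+ 'C(#|J|, 2) * \prod_(i in J) \prod_(j in U :\: J) tratio (x i) (x j).

Definition xy_factor (Y : {set 'I_n}) (i : 'I_m) : F :=
  \prod_(j in Y) ((x i - y j) / (x i - t * y j)).

Definition omega_on (U : {set 'I_m}) (Y : {set 'I_n}) : F :=
  \sum_(J : {set 'I_m} | J \subset U) omega_coef U J * \prod_(i in J) xy_factor Y i.

Lemma omega_on_setT : omega x y t = omega_on setT setT.
Proof.
rewrite /omega /omega_on [RHS](eq_bigl predT) => [|J]; last by rewrite subsetT.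
apply: eq_bigr => J _; rewrite /omega_coef setTD; congr (_ * _).
by apply: eq_bigr => i _; apply: eq_bigl => j; rewrite inE.
Qed.

Lemma omega_remove_at (k : 'I_m) (l : 'I_n) :
  omega (remove_at k x) (remove_at l y) t = omega_on [set~ k] [set~ l].
Proof.
have inj_lift := @lift_inj m k.
rewrite /omega_on big_subsets_setC1; apply: eq_bigr => J _.
have setD_lift : [set~ k] :\: lift k @: J = lift k @: ~: J.
  apply/setP => z; rewrite !inE; case: (unliftP k z) => [j ->|->].
    by rewrite !mem_imset // !inE eq_sym neq_lift andbT.
  by rewrite eqxx andbF; apply/esym/imsetP => -[j _ /eqP]; rewrite (negbTE (neq_lift k j)).
rewrite /omega_coef card_imset // setD_lift !(big_imset _ (in2W inj_lift)) /=.
congr (_ * _ * _); apply: eq_bigr => i _; first by rewrite (big_imset _ (in2W inj_lift)).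
by rewrite /xy_factor -big_lift_setC1.
Qed.

Lemma omega_coef_setU1_out (i : 'I_m) (U J : {set 'I_m}) : i \notin U -> i \notin J ->
  omega_coef (i |: U) J = omega_coef U J * \prod_(a in J) tratio (x a) (x i).
Proof.
move=> iU iJ; rewrite /omega_coef; have iUJ : i \notin U :\: J by rewrite inE negb_and iU orbT.
have -> : (i |: U) :\: J = i |: (U :\: J).
  by apply/setP => z; rewrite !inE; case: eqP => // ->; rewrite iJ.
rewrite -[RHS]mulrA -big_split /=; congr (_ * _); apply: eq_bigr => a _.
by rewrite big_setU1 //= mulrC.
Qed.

Lemma omega_coef_setU1_in (i : 'I_m) (U J : {set 'I_m}) : i \notin U -> i \notin J ->
  omega_coef (i |: U) (i |: J)
  = - t ^+ #|J| * \prod_(j in U :\: J) tratio (x i) (x j) * omega_coef U J.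
Proof.
move=> iU iJ; rewrite /omega_coef; have -> : (i |: U) :\: (i |: J) = U :\: J.
  by apply/setP => z; rewrite !inE; case: eqP => // ->; rewrite (negbTE iU) andbF.
rewrite cardsU1 iJ add1n binS bin1 exprS exprD big_setU1 //=; ring.
Qed.

End OmegaSubsets.

Section PartialFractions.
Variables (F : fieldType) (m : nat) (x : 'I_m -> F) (t : F).
Hypothesis x_inj : injective x.

Lemma x_sub_neq0 (i j : 'I_m) : i != j -> x i - x j != 0.
Proof. by move=> ij; rewrite subr_eq0 (inj_eq x_inj). Qed.

Lemma prod_tratio_partial_fraction (k : 'I_m) (J : {set 'I_m}) : k \notin J ->
  \prod_(a in J) tratio t (x a) (x k)
  = t ^+ #|J| - (1 - t) * \sum_(i in J) x i / (x k - x i) * \prod_(a in J :\ i) tratio t (x a) (x i).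
Proof.
move=> kJ; pose p := \prod_(a <- enum J) ((- t) *: 'X + (x a)%:P).
have p_at (z : F) : p.[z] = \prod_(a in J) (x a - t * z) :> F.
  by rewrite horner_prod big_enum; apply: eq_bigr => a _; rewrite !hornerE addrC mulNr.
have card_kJ : #|k |: J| = #|J|.+1 by rewrite cardsU1 kJ.
have lag : \sum_(a in k |: J) p.[x a] / \prod_(b in (k |: J) :\ a) (x a - x b) = (- t) ^+ #|J|.
  rewrite lagrange_sum_coef ?card_kJ /=.
  - by rewrite {1}cardE /p coef_prod_linear big_enum prodr_const.
  - exact: in2W.
  - by rewrite cardE size_prod_linear.
move: lag; rewrite big_setU1 //= setU1K //.
have term_k : p.[x k] / \prod_(b in J) (x k - x b) = (-1) ^+ #|J| * \prod_(a in J) tratio t (x a) (x k).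
  by rewrite p_at [X in _ / X]prodrB_sign /tratio prodf_div invfM invr_sign; ring.
have term_i i : i \in J -> p.[x i] / \prod_(b in (k |: J) :\ i) (x i - x b)
  = (-1) ^+ #|J| * ((1 - t) * (x i / (x k - x i) * \prod_(a in J :\ i) tratio t (x a) (x i))).
  move=> Ji; have ki : k != i by apply: contraNneq kJ => ->.
  rewrite setD1U1 // p_at (big_setD1 i Ji) big_setU1 /=; last by rewrite !inE negb_and kJ orbT.
  rewrite [X in _ / (_ * X)]prodrB_sign /tratio prodf_div (cardsD1 i J) Ji add1n exprS.
  rewrite !invfM invr_sign.
  have D_neq0 : \prod_(b in J :\ i) (x b - x i) != 0.
    by apply/prodf_neq0 => b; rewrite !inE => /andP[bi _]; apply: x_sub_neq0.
  have ik_neq0 : x i - x k != 0 by rewrite x_sub_neq0 // eq_sym.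
  have ki_neq0 := x_sub_neq0 ki.
  by field; rewrite D_neq0 ik_neq0 ki_neq0.
rewrite term_k (eq_bigr _ term_i) -mulr_sumr -mulrDr [X in _ = X]exprNn.
by move/lreg_sign <-; rewrite mulr_sumr addrK.
Qed.

End PartialFractions.

Section Residues.
Variables (F : fieldType) (m n : nat) (x : 'I_m -> F) (y : 'I_n -> F) (t : F).
Variables (k : 'I_m) (S : {set 'I_m}).

Definition y_residue (l : 'I_n) : F :=
  y l / (x k - t * y l) * \prod_(i in S) ((x i - y l) / (x i - t * y l))
  * \prod_(j in [set~ l]) ((y j - t * y l) / (y j - y l)).

Hypotheses (x_inj : injective x) (y_inj : injective y) (t_neq0 : t != 0).
Hypotheses (x_neq_ty : forall i j, x i != t * y j) (kS : k \notin S).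

(* The Lagrange terms below are the residues of
     prod_(i in S) (z - t x_i) / (z - x_i) * prod_j (z - y_j) / (z - t y_j) / (z - x_k)
   at its simple poles z = t y_l, x_k, x_i (i in S); they add up to 1, its behaviour at
   infinity. *)
Let node (z : 'I_n + 'I_m) : F := match z with inl j => t * y j | inr i => x i end.
Let nodes := sum_set [set: 'I_n] (k |: S).
Let P := \prod_(w <- [seq t * x i | i in S] ++ [seq y j | j in [set: 'I_n]]) ('X - w%:P).
Let lterm (a : 'I_n + 'I_m) := P.[node a] / \prod_(b in nodes :\ a) (node a - node b).

Let P_at (z : F) :
  P.[z] = \prod_(i in S) (z - t * x i) * \prod_(j in [set: 'I_n]) (z - y j) :> F.
Proof.
rewrite horner_prod big_cat !big_image /=.
by congr (_ * _); apply: eq_bigr => ? _; rewrite hornerXsubC.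
Qed.

Let lterm_sum : \sum_(a in nodes) lterm a = 1.
Proof.
have size_P : size P = #|nodes|.
  by rewrite size_prod_XsubC size_cat !size_image card_sum_set cardsU1 kS add1n addnS addnC.
have node_inj : {in nodes &, injective node}.
  move=> [j|i] [j'|i'] _ _ /=.
  - by move/(mulfI t_neq0)/y_inj->.
  - by move=> eq_xy; have := x_neq_ty i' j; rewrite eq_xy eqxx.
  - by move=> eq_xy; have := x_neq_ty i j'; rewrite eq_xy eqxx.
  - by move/x_inj->.
rewrite /lterm lagrange_sum_coef ?size_P // -size_P -lead_coefE.
exact: lead_coef_prod_XsubC.
Qed.

Let lterm_y l : lterm (inl l) = t ^+ #|S| / t ^+ n.-1 * (1 - t) * y_residue l.
Proof.
rewrite /lterm P_at /nodes sum_setD1l big_sum_set /= big_setU1 //= setTD.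
rewrite (big_setD1 l) ?in_setT //= setTD.
under eq_bigr do rewrite -mulrBr; under [X in _ / (X * _)]eq_bigr do rewrite -mulrBr.
rewrite !prodrMl !(prodrB_sign _ (fun=> t * y l)) !(prodrB_sign _ (fun=> y l)).
rewrite /y_residue !prodf_div cardsC1 card_ord.
have ty_neq_x : t * y l - x k != 0 by rewrite subr_eq0 eq_sym x_neq_ty.
have xk_neq_ty : x k - t * y l != 0 by rewrite subr_eq0 x_neq_ty.
have D1_neq0 : \prod_(i in S) (x i - t * y l) != 0.
  by apply/prodf_neq0 => i _; rewrite subr_eq0 x_neq_ty.
have D2_neq0 : \prod_(j in [set~ l]) (y j - y l) != 0.
  by apply/prodf_neq0 => j; rewrite !inE => jl; rewrite subr_eq0 (inj_eq y_inj).
have tn_neq0 : t ^+ n.-1 != 0 by rewrite expf_neq0.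
by field; rewrite ty_neq_x xk_neq_ty D1_neq0 D2_neq0 tn_neq0 !signr_eq0.
Qed.

Let xy_denom_neq0 i : \prod_(j in [set: 'I_n]) (x i - t * y j) != 0.
Proof. by apply/prodf_neq0 => j _; rewrite subr_eq0 x_neq_ty. Qed.

Let lterm_xk : lterm (inr k) = \prod_(i in S) tratio t (x k) (x i) * xy_factor x y t setT k.
Proof.
rewrite /lterm P_at /nodes sum_setD1r setU1K // big_sum_set /= /tratio /xy_factor !prodf_div.
have D_neq0 : \prod_(i in S) (x k - x i) != 0.
  by apply/prodf_neq0 => i iS; apply: (x_sub_neq0 x_inj); apply: contraNneq kS => ->.
by field; rewrite xy_denom_neq0 D_neq0.
Qed.

Let lterm_x i : i \in S -> lterm (inr i)
  = - (1 - t) * (x i / (x k - x i) * \prod_(j in S :\ i) tratio t (x i) (x j)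
                 * xy_factor x y t setT i).
Proof.
move=> iS; have ki : k != i by apply: contraNneq kS => ->.
rewrite /lterm P_at /nodes sum_setD1r setD1U1 // big_sum_set /= big_setU1 /=; last first.
  by rewrite !inE negb_and kS orbT.
rewrite (big_setD1 i iS) /= /tratio /xy_factor !prodf_div.
have D_neq0 : \prod_(j in S :\ i) (x i - x j) != 0.
  by apply/prodf_neq0 => j; rewrite !inE => /andP[ji _]; apply: (x_sub_neq0 x_inj); rewrite eq_sym.
have ik_neq0 : x i - x k != 0 by rewrite (x_sub_neq0 x_inj) // eq_sym.
by field; rewrite xy_denom_neq0 D_neq0 ik_neq0 (x_sub_neq0 x_inj ki).
Qed.

Lemma sum_y_residue :
  t ^+ #|S| / t ^+ n.-1 * (1 - t) * \sum_l y_residue l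
  = 1 - \prod_(i in S) tratio t (x k) (x i) * xy_factor x y t setT k
    + (1 - t) * \sum_(i in S) x i / (x k - x i) * \prod_(j in S :\ i) tratio t (x i) (x j)
                              * xy_factor x y t setT i.
Proof.
have := lterm_sum; rewrite /nodes big_sum_set (eq_bigl xpredT) => [|l]; last by rewrite inE.
rewrite big_setU1 //= lterm_xk (eq_bigr _ lterm_x).
rewrite (eq_bigr _ (fun l _ => lterm_y l)) -!mulr_sumr => sum_eq1.
by rewrite -[X in X - _ + _]sum_eq1; ring.
Qed.

End Residues.

Section Expansion.
Variables (F : fieldType) (m n : nat) (x : 'I_m -> F) (y : 'I_n -> F) (t : F).
Hypotheses (x_inj : injective x) (y_inj : injective y) (t_neq0 : t != 0).
Hypothesis x_neq_ty : forall i j, x i != t * y j.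
Variables (k : 'I_m) (U : {set 'I_m}).
Hypothesis kU : k \notin U.

Local Notation f := (xy_factor x y t setT).
Let weight (J : {set 'I_m}) := omega_coef x t U J * \prod_(i in J) f i.
Let pf_sum (J : {set 'I_m}) :=
  \sum_(i in J) x i / (x k - x i) * \prod_(a in J :\ i) tratio t (x a) (x i).
Let res_sum (S : {set 'I_m}) :=
  \sum_(i in S) x i / (x k - x i) * \prod_(j in S :\ i) tratio t (x i) (x j) * f i.

Lemma omega_on_setU1_split :
  omega_on x y t (k |: U) setT
  = \sum_(J : {set 'I_m} | J \subset U)
      weight J * (t ^+ #|J| * (1 - \prod_(i in U :\: J) tratio t (x k) (x i) * f k)
                  - (1 - t) * pf_sum J).
Proof.
rewrite /omega_on /weight /pf_sum big_subsets_setU1 //; apply: eq_bigr => J JU.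
have kJ : k \notin J by apply: contra kU; apply: (subsetP JU).
rewrite omega_coef_setU1_out // omega_coef_setU1_in // big_setU1 //=.
rewrite prod_tratio_partial_fraction //; ring.
Qed.

Lemma sum_omega_on_setC1 :
  \sum_l omega_on x y t U [set~ l] * (y l / (x k - t * y l))
          * \prod_(i in U) ((x i - y l) / (x i - t * y l))
          * \prod_(j in [set~ l]) ((y j - t * y l) / (y j - y l))
  = \sum_(J : {set 'I_m} | J \subset U) weight J * \sum_l y_residue x y t k (U :\: J) l.
Proof.
under eq_bigr do rewrite /omega_on !mulr_suml.
rewrite exchange_big; apply: eq_bigr => J JU; rewrite /weight mulr_sumr.
apply: eq_bigr => l _.
have f_split i : f i = (x i - y l) / (x i - t * y l) * xy_factor x y t [set~ l] i.
  by rewrite /xy_factor (big_setD1 l) ?in_setT // setTD.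
rewrite [\prod_(i in U) _](big_setID J) (setIidPr JU) (eq_bigr _ (fun i _ => f_split i)).
by rewrite /y_residue !big_split /=; ring.
Qed.

Lemma residue_sum_pairing :
  \sum_(J : {set 'I_m} | J \subset U) weight J * t ^+ #|J| * res_sum (U :\: J)
  = - \sum_(J : {set 'I_m} | J \subset U) weight J * pf_sum J.
Proof.
rewrite /weight /pf_sum /res_sum -sumrN.
under eq_bigr do rewrite mulr_sumr; under [RHS]eq_bigr do rewrite mulr_sumr -sumrN.
rewrite big_subsets_setD1; apply: eq_bigr => J JU; apply: eq_bigr => i Ji.
have Ui : i \in U by apply: (subsetP JU).
have iU' : i \notin U :\ i by rewrite setD11.
have iJ' : i \notin J :\ i by rewrite setD11.
have UJ : (U :\: (J :\ i)) :\ i = U :\: J.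
  by apply/setP => z; rewrite !inE; case: (eqVneq z i) => [->|]; rewrite ?Ji ?andbF.
have UJ' : (U :\ i) :\: (J :\ i) = U :\: J by rewrite setDDl setD1K.
have := omega_coef_setU1_out x t iU' iJ'; have := omega_coef_setU1_in x t iU' iJ'.
rewrite !setD1K // UJ UJ' => -> ->.
rewrite [in RHS](big_setD1 i Ji) /=; ring.
Qed.

Lemma omega_on_setU1 :
  omega_on x y t (k |: U) setT
  = t ^+ #|U| / t ^+ n.-1 * (1 - t)
    * \sum_l omega_on x y t U [set~ l] * (y l / (x k - t * y l))
              * \prod_(i in U) ((x i - y l) / (x i - t * y l))
              * \prod_(j in [set~ l]) ((y j - t * y l) / (y j - y l)).
Proof.
rewrite omega_on_setU1_split sum_omega_on_setC1 mulr_sumr.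
have -> : \sum_(J : {set 'I_m} | J \subset U)
      t ^+ #|U| / t ^+ n.-1 * (1 - t) * (weight J * \sum_l y_residue x y t k (U :\: J) l)
  = \sum_(J : {set 'I_m} | J \subset U) weight J * t ^+ #|J|
      * (1 - \prod_(i in U :\: J) tratio t (x k) (x i) * f k + (1 - t) * res_sum (U :\: J)).
  apply: eq_bigr => J JU; have kUJ : k \notin U :\: J by rewrite inE negb_and kU orbT.
  rewrite /res_sum -sum_y_residue // -(cardsID J U) (setIidPr JU) exprD; ring.
apply/eqP; rewrite -subr_eq0 -sumrB.
rewrite (eq_bigr (fun J =>
  - (1 - t) * (weight J * pf_sum J + weight J * t ^+ #|J| * res_sum (U :\: J)))).
  by rewrite -mulr_sumr big_split /= residue_sum_pairing addrN mulr0.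
by move=> J _; ring.
Qed.

End Expansion.

Theorem proposition3p4 (F : fieldType) (m n : nat) (x : 'I_m -> F)
  (y : 'I_n -> F) (t : F) (k : 'I_m) :
  (1 <= m)%N -> (m <= n)%N ->
  t != 0 ->
  injective x -> injective y ->
  (forall (i : 'I_m) (j : 'I_n), x i != t * y j) ->
  omega x y t =
  t ^ (m%:Z - n%:Z) * (1 - t) *
  \sum_(l : 'I_n)
    (omega (remove_at k x) (remove_at l y) t
     * (y l / (x k - t * y l))
     * (\prod_(i : 'I_m | i != k) ((x i - y l) / (x i - t * y l)))
     * (\prod_(i : 'I_n | i != l) ((y i - t * y l) / (y i - y l)))).
Proof.
move=> m_gt0 le_mn t_neq0 x_inj y_inj x_neq_ty.
have k_notin : k \notin [set~ k] by rewrite !inE eqxx.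
rewrite omega_on_setT -[X in omega_on _ _ _ X _](setUCr [set k]) omega_on_setU1 //.
congr (_ * _ * _).
  rewrite cardsC1 card_ord.
  have -> : (m%:Z - n%:Z = m.-1%:Z - n.-1%:Z)%R.
    by rewrite -[in LHS](prednK m_gt0) -[in LHS](prednK (leq_trans m_gt0 le_mn)) !intS opprD addrACA subrr add0r.
  by rewrite expfzDr // -exprnN.
apply: eq_bigr => l _; rewrite omega_remove_at.
by congr (_ * _ * _ * _); apply: eq_bigl => i; rewrite !inE.
Qed.
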